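(* Let $L$ be an $R_0$-algebra and $k\in[0,1)$. If $\mu$ is an $(\in,\in\vee q_k)$-fuzzy fated filter of $L$ with $\mu(1)<\tfrac{1-k}{2}$, then $\mu$ is an $(\in,\in)$-fuzzy fated filter of $L$.
   Context: An $R_0$-algebra is a bounded distributive lattice $(L,\wedge,\vee,0,1)$ with an order-reversing involution $\neg$ and a binary operation $\to$ such that for all $x,y,z\in L$: $x\to y=\neg y\to\neg x$; $1\to x=x$; $(y\to z)\wedge((x\to y)\to(x\to z))=y\to z$; $x\to(y\to z)=y\to(x\to z)$; $x\to(y\vee z)=(x\to y)\vee(x\to z)$; $(x\to y)\vee((x\to y)\to(\neg x\vee y))=1$. For $x\in L$, $t\in(0,1]$ and a fuzzy subset $\mu:L\to[0,1]$: $x_t\in\mu$ iff $\mu(x)\ge t$; $x_t\,q_k\,\mu$ iff $\mu(x)+t+k>1$; $x_t\in\vee q_k\,\mu$ iff $x_t\in\mu$ or $x_t\,q_k\,\mu$. $\mu$ is an $(\in,\in\vee q_k)$-fuzzy fated filter of $L$ if (1) for all $x\in L$, $t\in(0,1]$: $x_t\in\mu\Rightarrow 1_t\in\vee q_k\,\mu$; and (2) for all $x,a,y\in L$, $t,s\in(0,1]$: if $(a\to((x\to y)\to x))_t\in\mu$ and $a_s\in\mu$ then $x_{\min\{t,s\}}\in\vee q_k\,\mu$. An $(\in,\in)$-fuzzy fated filter is defined in the same way with ''$\in\vee q_k$'' replaced by ''$\in$'' in the conclusions of (1) and (2). *)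

From Stdlib Require Import Reals.
Open Scope R_scope.

(* The lattice order is x <= y iff meet x y = x. *)
Record R0_algebra (L : Type) (meet join : L -> L -> L) (zero one : L)
    (neg : L -> L) (imp : L -> L -> L) : Prop := {
  r0_meet_comm : forall x y, meet x y = meet y x;
  r0_join_comm : forall x y, join x y = join y x;
  r0_meet_assoc : forall x y z, meet x (meet y z) = meet (meet x y) z;
  r0_join_assoc : forall x y z, join x (join y z) = join (join x y) z;
  r0_absorb_mj : forall x y, meet x (join x y) = x;
  r0_absorb_jm : forall x y, join x (meet x y) = x;
  r0_distr : forall x y z, meet x (join y z) = join (meet x y) (meet x z);
  r0_zero : forall x, join zero x = x;
  r0_one : forall x, meet one x = x;
  r0_neg_invol : forall x, neg (neg x) = x;
  r0_neg_rev : forall x y, meet x y = x -> meet (neg y) (neg x) = neg y;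
  r0_contra : forall x y, imp x y = imp (neg y) (neg x);
  r0_one_imp : forall x, imp one x = x;
  r0_ax3 : forall x y z, meet (imp y z) (imp (imp x y) (imp x z)) = imp y z;
  r0_exch : forall x y z, imp x (imp y z) = imp y (imp x z);
  r0_imp_join : forall x y z, imp x (join y z) = join (imp x y) (imp x z);
  r0_ax6 : forall x y, join (imp x y) (imp (imp x y) (join (neg x) y)) = one
}.

(* fuzzy points: x_t ∈ mu, x_t q_k mu, x_t ∈∨q_k mu *)
Definition fin {L : Type} (mu : L -> R) (x : L) (t : R) : Prop := mu x >= t.
Definition fq {L : Type} (k : R) (mu : L -> R) (x : L) (t : R) : Prop :=
  mu x + t + k > 1.
Definition finq {L : Type} (k : R) (mu : L -> R) (x : L) (t : R) : Prop :=
  fin mu x t \/ fq k mu x t.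

Definition fuzzy_subset {L : Type} (mu : L -> R) : Prop :=
  forall x, 0 <= mu x <= 1.

Definition in_inq_fated_filter {L : Type} (one : L) (imp : L -> L -> L)
    (k : R) (mu : L -> R) : Prop :=
  (forall x t, 0 < t <= 1 -> fin mu x t -> finq k mu one t) /\
  (forall x a y t s, 0 < t <= 1 -> 0 < s <= 1 ->
     fin mu (imp a (imp (imp x y) x)) t -> fin mu a s ->
     finq k mu x (Rmin t s)).

Definition in_in_fated_filter {L : Type} (one : L) (imp : L -> L -> L)
    (mu : L -> R) : Prop :=
  (forall x t, 0 < t <= 1 -> fin mu x t -> fin mu one t) /\
  (forall x a y t s, 0 < t <= 1 -> 0 < s <= 1 ->
     fin mu (imp a (imp (imp x y) x)) t -> fin mu a s ->
     fin mu x (Rmin t s)).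

From Stdlib Require Import Reals Lra.
Open Scope R_scope.

(* Put c := (1 - k) / 2.  For a level t <= c and a point x with mu x < c we
   have mu x + t + k < 1, so x_t cannot be quasi-coincident with mu and
   x_t ∈∨q_k mu collapses to x_t ∈ mu.  Running both filter conditions at
   the truncated levels min(t, c) therefore yields membership at min(t, c);
   since mu 1 < c and mu x <= mu 1 for every x, membership at min(t, c)
   forces membership at t itself.  No property of the R0-algebra is used. *)

Lemma finq_fin {L : Type} (k : R) (mu : L -> R) (x : L) (t : R) :
  mu x + t + k <= 1 -> finq k mu x t -> fin mu x t.
Proof. unfold finq, fin, fq; lra. Qed.

Lemma fin_le {L : Type} (mu : L -> R) (x : L) (t t' : R) :
  t' <= t -> fin mu x t -> fin mu x t'.
Proof. unfold fin; lra. Qed.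

Lemma fin_Rmin_lt {L : Type} (mu : L -> R) (x : L) (t c : R) :
  mu x < c -> fin mu x (Rmin t c) -> fin mu x t.
Proof. unfold fin, Rmin; destruct (Rle_dec t c); lra. Qed.

Section SmallFatedFilter.

Variables (L : Type) (one : L) (imp : L -> L -> L) (k : R) (mu : L -> R).

Hypothesis k_lt1 : k < 1.
Hypothesis mu_fuzzy : fuzzy_subset mu.
Hypothesis mu_fated : in_inq_fated_filter one imp k mu.
Hypothesis mu_one_small : mu one < (1 - k) / 2.

Let c := (1 - k) / 2.

Lemma truncated_level t : 0 < t <= 1 -> 0 < Rmin t c <= 1.
Proof.
  intros Ht. split.
  - apply Rmin_glb_lt; unfold c; lra.
  - pose proof (Rmin_l t c); lra.
Qed.

Lemma finq_fin_below x t : mu x < c -> t <= c -> finq k mu x t -> fin mu x t.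
Proof. intros Hx Ht. apply finq_fin. unfold c in *; lra. Qed.

Lemma fin_one x t : 0 < t <= 1 -> fin mu x t -> fin mu one t.
Proof.
  intros Ht Hxt. apply (fin_Rmin_lt mu one t c mu_one_small).
  assert (Hq : finq k mu one (Rmin t c)).
  { apply (proj1 mu_fated x).
    - now apply truncated_level.
    - apply (fin_le mu x t); [apply Rmin_l | exact Hxt]. }
  apply finq_fin_below; [exact mu_one_small | apply Rmin_r | exact Hq].
Qed.

Lemma mu_le_one x : mu x <= mu one.
Proof.
  destruct (mu_fuzzy x) as [Hx0 Hx1], (mu_fuzzy one) as [Hone0 _].
  destruct (Req_dec (mu x) 0) as [Hx | Hx]; [lra |].
  pose proof (fin_one x (mu x)) as H. unfold fin in H. lra.
Qed.

Lemma fated_fin x a y t s : 0 < t <= 1 -> 0 < s <= 1 ->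
  fin mu (imp a (imp (imp x y) x)) t -> fin mu a s -> fin mu x (Rmin t s).
Proof.
  intros Ht Hs Hat Has.
  assert (Hq : finq k mu x (Rmin (Rmin t c) (Rmin s c))).
  { apply (proj2 mu_fated x a y); try now apply truncated_level.
    - apply (fin_le mu _ t); [apply Rmin_l | exact Hat].
    - apply (fin_le mu _ s); [apply Rmin_l | exact Has]. }
  assert (Hmin : Rmin (Rmin t c) (Rmin s c) = Rmin (Rmin t s) c).
  { unfold Rmin; repeat destruct Rle_dec; lra. }
  rewrite Hmin in Hq.
  assert (Hx : mu x < c) by (pose proof (mu_le_one x); unfold c; lra).
  apply (fin_Rmin_lt mu x _ c Hx).
  apply finq_fin_below; [exact Hx | apply Rmin_r | exact Hq].
Qed.

End SmallFatedFilter.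

Theorem corollary3p9 (L : Type) (meet join : L -> L -> L) (zero one : L)
    (neg : L -> L) (imp : L -> L -> L) (k : R) (mu : L -> R) :
  R0_algebra L meet join zero one neg imp ->
  0 <= k < 1 ->
  fuzzy_subset mu ->
  in_inq_fated_filter one imp k mu ->
  mu one < (1 - k) / 2 ->
  in_in_fated_filter one imp mu.
Proof.
  intros _ [_ Hk] Hfuzzy Hfated Hone. split.
  - exact (fin_one L one imp k mu Hk Hfated Hone).
  - exact (fated_fin L one imp k mu Hk Hfuzzy Hfated Hone).
Qed.
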